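(* Let $\mathfrak{h}$ be a Lie algebra with bracket $[\cdot,\cdot]$ and $\mathfrak{t}$ a Lie subalgebra. Then the maximal Lie subalgebra of $\mathfrak{h}$ which is invariant under the contraction along $\mathfrak{t}$ is isomorphic to a sum $\mathfrak{t}+\mathfrak{s}$ of $\mathfrak{t}$ and an Abelian subalgebra $\mathfrak{s}$ of $\mathfrak{h}$ with $[\mathfrak{t},\mathfrak{s}]\subset\mathfrak{s}$. The sum is not necessarily direct.
   Context: Contraction: choose a vector subspace $\mathfrak{t}^c$ complementary to $\mathfrak{t}$, so every $X\in\mathfrak{h}$ is uniquely $X_{\mathfrak{t}}+X_{\mathfrak{t}^c}$; set $\phi_\varepsilon(X)=X_{\mathfrak{t}}+\varepsilon X_{\mathfrak{t}^c}$ for $\varepsilon>0$. The contraction of $\mathfrak{h}$ along $\mathfrak{t}$ is the vector space of $\mathfrak{h}$ with bracket $[X,Y]'=\lim_{\varepsilon\to0}\phi_\varepsilon^{-1}([\phi_\varepsilon(X),\phi_\varepsilon(Y)])$. A Lie subalgebra $\mathfrak{a}\subset\mathfrak{h}$ is invariant under the contraction if $[X,Y]'=[X,Y]$ for all $X,Y\in\mathfrak{a}$ (so that $\mathfrak{a}$ is a Lie subalgebra of both with the same bracket). *)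

From HB Require Import structures.
From mathcomp Require Import all_boot all_order all_algebra.
From mathcomp Require Import all_classical all_reals all_analysis.
Set Implicit Arguments. Unset Strict Implicit. Unset Printing Implicit Defensive.
Import Order.TTheory GRing.Theory Num.Theory.
Import numFieldNormedType.Exports.
Local Open Scope classical_set_scope.
Local Open Scope ring_scope.

Section LieDefs.
Variables (R : realType) (h : normedModType R).

Definition lie_bracket (br : h -> h -> h) : Prop :=
  [/\ (forall (a : R) x y z, br (a *: x + y) z = a *: br x z + br y z),
      (forall (a : R) x y z, br x (a *: y + z) = a *: br x y + br x z),
      (forall x, br x x = 0) &
      (forall x y z, br x (br y z) + br y (br z x) + br z (br x y) = 0)].

Definition subspace (S : set h) : Prop :=
  S 0 /\ (forall (a : R) x y, S x -> S y -> S (a *: x + y)).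

Definition lie_subalgebra (br : h -> h -> h) (S : set h) : Prop :=
  subspace S /\ (forall x y, S x -> S y -> S (br x y)).

Definition abelian (br : h -> h -> h) (S : set h) : Prop :=
  forall x y, S x -> S y -> br x y = 0.

Definition complementary (t tc : set h) : Prop :=
  [/\ subspace tc,
      (forall x, exists a b, [/\ t a, tc b & x = a + b]) &
      (forall x, t x -> tc x -> x = 0)].

Definition comp_t (t tc : set h) (X : h) : h :=
  xget 0 [set a | t a /\ tc (X - a)].

Definition phi (t tc : set h) (eps : R) (X : h) : h :=
  comp_t t tc X + eps *: (X - comp_t t tc X).

Definition phi_inv (t tc : set h) (eps : R) (Y : h) : h :=
  comp_t t tc Y + eps^-1 *: (Y - comp_t t tc Y).

Definition contr_bracket (br : h -> h -> h) (t tc : set h) (X Y : h) : h :=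
  lim ((fun eps : R => phi_inv t tc eps (br (phi t tc eps X) (phi t tc eps Y)))
         @ at_right (0 : R)).

Definition contr_invariant (br : h -> h -> h) (t tc : set h) (A : set h) : Prop :=
  lie_subalgebra br A /\
  (forall X Y, A X -> A Y -> contr_bracket br t tc X Y = br X Y).

End LieDefs.

From Pilot Require Import Defs.
From HB Require Import structures.
From mathcomp Require Import all_boot all_order all_algebra.
From mathcomp Require Import all_classical all_reals all_analysis.
Import Order.TTheory GRing.Theory Num.Theory.
Import numFieldNormedType.Exports.
Local Open Scope classical_set_scope.
Local Open Scope ring_scope.

(* Write X = X_t + X_c along h = t + t^c.  For X in t and Y in t^c,
   phi_eps^-1 [phi_eps X, phi_eps Y] = eps [X,Y]_t + [X,Y]_c, and for X, Y in
   t^c it is eps times this.  Hence the contracted bracket vanishes on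
   t^c x t^c and is the t^c-component of the bracket on t x t^c.  In an
   invariant subalgebra A containing t, the part s = A ∩ t^c is therefore
   abelian and [t, s] lies in t^c, i.e. in s, while A = t + s because t is
   contained in A. *)

Section Subspaces.
Context {R : realType} {h : normedModType R}.
Implicit Types S T : set h.

Lemma subspaceD S x y : Defs.subspace S -> S x -> S y -> S (x + y).
Proof. by case=> _ SZD Sx Sy; rewrite -[x]scale1r; apply: SZD. Qed.

Lemma subspaceB S x y : Defs.subspace S -> S x -> S y -> S (x - y).
Proof. by case=> _ SZD Sx Sy; rewrite addrC -scaleN1r; apply: SZD. Qed.

Lemma subspaceI S T :
  Defs.subspace S -> Defs.subspace T -> Defs.subspace (S `&` T).
Proof.
move=> [S0 SZD] [T0 TZD]; split=> // a x y [Sx Tx] [Sy Ty].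
by split; [apply: SZD | apply: TZD].
Qed.

End Subspaces.

Section Complement.
Context {R : realType} {h : normedModType R} {t tc : set h}.
Hypotheses (t_sub : Defs.subspace t) (t_compl : complementary t tc).

Let tc_sub : Defs.subspace tc. Proof. by case: t_compl. Qed.

Let t_tc_eq0 x : t x -> tc x -> x = 0.
Proof. by case: t_compl => _ _; apply. Qed.

Local Notation pt := (comp_t t tc).

Lemma comp_tP X : t (pt X) /\ tc (X - pt X).
Proof.
apply: (xgetPex 0 (P := [set a | t a /\ tc (X - a)])).
case: t_compl => _ /(_ X) [a [b [ta tcb ->]]] _.
by exists a; split=> //; rewrite addrAC subrr add0r.
Qed.

Lemma comp_t_unique X a : t a -> tc (X - a) -> pt X = a.
Proof.
move=> ta tcXa; have [tpX tcXpX] := comp_tP X.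
apply/eqP; rewrite -subr_eq0; apply/eqP/t_tc_eq0; first exact: subspaceB.
have -> : pt X - a = (X - a) - (X - pt X) by rewrite opprB [RHS]addrC addrA subrK.
exact: subspaceB.
Qed.

Lemma comp_tZ k X : pt (k *: X) = k *: pt X.
Proof.
have [tpX tcXpX] := comp_tP X.
apply: comp_t_unique; rewrite -?scalerBr -[_ *: _]addr0.
  by case: t_sub => t0; apply.
by case: tc_sub => tc0; apply.
Qed.

Lemma comp_t_id X : t X -> pt X = X.
Proof. by move=> tX; apply: comp_t_unique; rewrite ?subrr; case: tc_sub. Qed.

Lemma comp_t_tc X : tc X -> pt X = 0.
Proof. by move=> tcX; apply: comp_t_unique; rewrite ?subr0; case: t_sub. Qed.

Lemma tc_comp_t0 X : pt X = 0 -> tc X.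
Proof. by move=> pX0; have [_] := comp_tP X; rewrite pX0 subr0. Qed.

Lemma phi_t eps X : t X -> phi t tc eps X = X.
Proof. by move=> tX; rewrite /phi comp_t_id // subrr scaler0 addr0. Qed.

Lemma phi_tc eps X : tc X -> phi t tc eps X = eps *: X.
Proof. by move=> tcX; rewrite /phi comp_t_tc // subr0 add0r. Qed.

Lemma phi_inv_scale eps k Z : phi_inv t tc eps (k *: Z) = k *: phi_inv t tc eps Z.
Proof. by rewrite /phi_inv comp_tZ [RHS]scalerDr -scalerBr !scalerA mulrC. Qed.

Lemma phi_invZ eps Z : eps != 0 ->
  phi_inv t tc eps (eps *: Z) = eps *: pt Z + (Z - pt Z).
Proof.
by move=> eps0; rewrite /phi_inv comp_tZ -scalerBr scalerA mulVf ?scale1r.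
Qed.

Lemma subspace_comp_decomp A : Defs.subspace A -> t `<=` A ->
  A = [set x + y | x in t & y in A `&` tc].
Proof.
move=> A_sub tA; apply/seteqP; split=> [X AX | _ [x tx [y [Ay _] <-]]].
  have [tpX tcXpX] := comp_tP X; exists (pt X) => //.
  exists (X - pt X); last by rewrite addrC subrK.
  by split=> //; apply: subspaceB => //; apply: tA.
by apply: subspaceD => //; apply: tA.
Qed.

End Complement.

Lemma lim_at_right_ext {R : realType} {V : normedModType R} {f g : R -> V}
    {a : R} {l : V} :
  (forall e, a < e -> f e = g e) -> g x @[x --> a] --> l ->
  lim (f x @[x --> a^'+]) = l.
Proof.
move=> fg gl; apply: cvg_lim => //.
apply: cvg_trans (cvg_at_right_filter gl).
by apply: near_eq_cvg; near=> e; rewrite fg.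
Unshelve. all: by end_near.
Qed.

Lemma cvg_scale_affine {R : realType} {V : normedModType R} (a b : V) :
  e *: a + b @[e --> (0 : R)] --> b.
Proof.
rewrite -[b in _ --> b]add0r; apply: cvgD; last exact: cvg_cst.
by rewrite -(scale0r a); apply: cvgZ; [exact: cvg_id | exact: cvg_cst].
Qed.

Section Contraction.
Context {R : realType} {h : normedModType R} {br : h -> h -> h} {t tc : set h}.
Hypotheses (brDl : forall (a : R) x y z, br (a *: x + y) z = a *: br x z + br y z)
           (brDr : forall (a : R) x y z, br x (a *: y + z) = a *: br x y + br x z).
Hypotheses (t_sub : Defs.subspace t) (t_compl : complementary t tc).

Local Notation pt := (comp_t t tc).

Lemma brZl (a : R) x y : br (a *: x) y = a *: br x y.
Proof.
have br0l : br 0 y = 0.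
  have := brDl 1 0 0 y; rewrite !scale1r addr0.
  by move/(congr1 (fun v => v - br 0 y)); rewrite subrr addrK => <-.
by have := brDl a x 0 y; rewrite !addr0 br0l addr0.
Qed.

Lemma brZr (a : R) x y : br x (a *: y) = a *: br x y.
Proof.
have br0r : br x 0 = 0.
  have := brDr 1 x 0 0; rewrite !scale1r addr0.
  by move/(congr1 (fun v => v - br x 0)); rewrite subrr addrK => <-.
by have := brDr a x y 0; rewrite !addr0 br0r addr0.
Qed.

Lemma contr_bracket_t_tc X Y : t X -> tc Y ->
  contr_bracket br t tc X Y = br X Y - pt (br X Y).
Proof.
move=> tX tcY; apply: (lim_at_right_ext (g := fun e => e *: pt (br X Y) + _)).
  move=> e e_gt0; rewrite phi_t // phi_tc // brZr phi_invZ // gt_eqF //.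
exact: cvg_scale_affine.
Qed.

Lemma tc_bracket_contr_fixed X Y : t X -> tc Y ->
  contr_bracket br t tc X Y = br X Y -> tc (br X Y).
Proof.
move=> tX tcY; rewrite contr_bracket_t_tc // -[RHS]addr0 => /addrI /eqP.
by rewrite oppr_eq0 => /eqP /(tc_comp_t0 t_compl).
Qed.

Lemma contr_bracket_tc_tc X Y : tc X -> tc Y -> contr_bracket br t tc X Y = 0.
Proof.
move=> tcX tcY.
apply: (lim_at_right_ext (g := fun e => e *: (e *: pt (br X Y) + (br X Y - pt (br X Y))))).
  move=> e e_gt0; rewrite !phi_tc // brZl brZr (phi_inv_scale t_sub t_compl).
  by rewrite phi_invZ // gt_eqF.
rewrite -(scale0r (br X Y - pt (br X Y))).
by apply: cvgZ; [exact: cvg_id | exact: cvg_scale_affine].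
Qed.

End Contraction.

Theorem propositionA1 (R : realType) (h : normedModType R) (br : h -> h -> h)
    (t tc : set h) :
  lie_bracket br -> lie_subalgebra br t -> complementary t tc ->
  forall A : set h,
    contr_invariant br t tc A -> t `<=` A ->
    (forall B : set h, contr_invariant br t tc B -> t `<=` B -> A `<=` B -> B = A) ->
    exists s : set h,
      [/\ lie_subalgebra br s, abelian br s,
          (forall x y, t x -> s y -> s (br x y)) &
          A = [set x + y | x in t & y in s]].
Proof.
move=> [brDl brDr _ _] [t_sub _] t_compl A [[A_sub A_br] A_inv] tA _.
have tc_sub : Defs.subspace tc by case: t_compl.
have s_abelian : abelian br (A `&` tc).
  move=> X Y [AX tcX] [AY tcY].
  by rewrite -A_inv // (contr_bracket_tc_tc brDl brDr t_sub t_compl).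
exists (A `&` tc); split=> //.
- split; first exact: subspaceI.
  by move=> X Y sX sY; rewrite s_abelian //; split; [case: A_sub | case: tc_sub].
- move=> X Y tX [AY tcY]; split; first exact/A_br/AY/tA.
  by apply: (tc_bracket_contr_fixed brDr t_sub t_compl) => //; apply: A_inv => //; apply: tA.
- exact: subspace_comp_decomp.
Qed.
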